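(* Let $(G,\tau,\partial)$ be a Polish topometric group. Then for every $\tau$-open $U\subseteq G$ and every $\varepsilon>0$, $(U)_\varepsilon=(1)_\varepsilon\cdot U$ and this set is $\tau$-open in $G$.
   Context: A Polish topometric group is a triple $(G,\tau,\partial)$ with $(G,\tau)$ a Polish group, $\partial$ a bi-invariant metric whose topology refines $\tau$ and which is $\tau$-lower semi-continuous. For $A\subseteq G$, $(A)_\varepsilon=\{g\colon\partial(g,A)<\varepsilon\}$, and $(1)_\varepsilon=(\{1_G\})_\varepsilon$. *)

From HB Require Import structures.
From mathcomp Require Import all_boot all_order all_algebra.
From mathcomp Require Import all_classical all_reals all_analysis.
Set Implicit Arguments. Unset Strict Implicit. Unset Printing Implicit Defensive.
Import Order.TTheory GRing.Theory Num.Theory.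
Local Open Scope classical_set_scope.
Local Open Scope ring_scope.

Definition is_group (G : Type) (mul : G -> G -> G) (inv : G -> G) (one : G) : Prop :=
  [/\ forall x y z, mul x (mul y z) = mul (mul x y) z,
      forall x, mul one x = x, forall x, mul x one = x,
      forall x, mul (inv x) x = one & forall x, mul x (inv x) = one].

Definition is_topological_group (G : topologicalType)
  (mul : G -> G -> G) (inv : G -> G) (one : G) : Prop :=
  [/\ is_group mul inv one,
      continuous (fun p : G * G => mul p.1 p.2) & continuous inv].

Definition is_metric (R : realType) (X : Type) (m : X -> X -> R) : Prop :=
  [/\ forall x y, 0 <= m x y, forall x y, m x y = 0 <-> x = y,
      forall x y, m x y = m y x &
      forall x y z, m x z <= m x y + m y z].

Definition metric_compatible (R : realType) (X : topologicalType)
  (m : X -> X -> R) : Prop :=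
  forall U : set X, open U <->
    (forall x, U x -> exists2 e : R, 0 < e & [set y | m x y < e] `<=` U).

Definition metric_complete (R : realType) (X : topologicalType)
  (m : X -> X -> R) : Prop :=
  forall u : nat -> X,
    (forall e : R, 0 < e -> exists N, forall p q, (N <= p)%N -> (N <= q)%N -> m (u p) (u q) < e) ->
    exists l : X, u @ \oo --> l.

Definition polish (R : realType) (X : topologicalType) : Prop :=
  (exists D : set X, countable D /\ closure D = setT) /\
  (exists m : X -> X -> R, [/\ is_metric m, metric_compatible m & metric_complete m]).

Definition is_emetric (R : realType) (X : Type) (d : X -> X -> \bar R) : Prop :=
  [/\ forall x y, (0 <= d x y)%E, forall x y, d x y = 0%E <-> x = y,
      forall x y, d x y = d y x &
      forall x y z, (d x z <= d x y + d y z)%E].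

(* Polish topometric group (G, tau, d): tau is the topology of G. *)
Definition polish_topometric_group (R : realType) (G : topologicalType)
  (mul : G -> G -> G) (inv : G -> G) (one : G) (d : G -> G -> \bar R) : Prop :=
  [/\ is_topological_group mul inv one /\ polish R G,
      is_emetric d,
      (forall g x y, d (mul g x) (mul g y) = d x y) /\
      (forall g x y, d (mul x g) (mul y g) = d x y),
      (forall U : set G, open U -> forall x, U x ->
         exists2 e : R, 0 < e & [set y | (d x y < e%:E)%E] `<=` U) &
      (* d is tau-lower semicontinuous *)
      (forall r : R, closed [set p : G * G | (d p.1 p.2 <= r%:E)%E])].

(* d(g, A) = inf_{a in A} d(g, a)  (= +oo for A empty) *)
Definition dist_set (R : realType) (G : Type) (d : G -> G -> \bar R) (A : set G) (g : G)
  : \bar R := ereal_inf [set d g a | a in A].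

Definition thicken (R : realType) (G : Type) (d : G -> G -> \bar R) (A : set G) (eps : R)
  : set G := [set g | (dist_set d A g < eps%:E)%E].

Definition set_mul (G : Type) (mul : G -> G -> G) (A B : set G) : set G :=
  [set g | exists2 a, A a & exists2 b, B b & g = mul a b].

From mathcomp Require Import all_boot all_order all_algebra.
From mathcomp Require Import all_classical all_reals all_analysis.
Import Order.TTheory GRing.Theory Num.Theory.
Local Open Scope classical_set_scope.
Local Open Scope ring_scope.

(* Right invariance gives d(g, a) = d(g a^-1, 1), so g is eps-close to U exactly
   when g a^-1 lies in the eps-ball around 1 for some a in U; hence
   (U)_eps = (1)_eps U, a union of left translates of U, which is open as soon
   as U is. *)

Lemma thickenP (R : realType) (G : Type) (d : G -> G -> \bar R)
    (A : set G) (eps : R) (g : G) :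
  thicken d A eps g <-> exists2 a, A a & (d g a < eps%:E)%E.
Proof.
split; first by move=> /ereal_inf_lt [_ [a Aa <-] lt]; exists a.
move=> [a Aa lt]; apply: le_lt_trans lt.
by apply: ereal_inf_lbound; exists a.
Qed.

Section GroupThicken.
Context {G : Type} {mul : G -> G -> G} {inv : G -> G} {one : G}.
Hypothesis group_G : is_group mul inv one.

Lemma thicken_set_mul {R : realType} {d : G -> G -> \bar R} (A : set G) (eps : R) :
  (forall g x y, d (mul x g) (mul y g) = d x y) ->
  thicken d A eps = set_mul mul (thicken d [set one] eps) A.
Proof.
have [mulA mul1g mulg1 mulVg mulgV] := group_G.
move=> d_invr; apply/seteqP; split=> g.
- move=> /thickenP [a Aa lt].
  exists (mul g (inv a)); last by exists a => //; rewrite -mulA mulVg mulg1.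
  by apply/thickenP; exists one => //; rewrite -(mulgV a) d_invr.
- move=> [h /thickenP [_ -> lt] [a Aa ->]].
  by apply/thickenP; exists a => //; rewrite -{2}(mul1g a) d_invr.
Qed.

End GroupThicken.

Lemma continuous_mull (G : topologicalType) (mul : G -> G -> G) :
  continuous (fun p : G * G => mul p.1 p.2) -> forall h, continuous (mul h).
Proof.
move=> cont_mul h x.
exact: cvg_comp (cvg_pair (cvg_cst h) cvg_id) (cont_mul (h, x)).
Qed.

Lemma open_set_mul (G : topologicalType) (mul : G -> G -> G) (inv : G -> G)
    (one : G) (A B : set G) :
  is_topological_group mul inv one -> open B -> open (set_mul mul A B).
Proof.
move=> [[mulA mul1g _ mulVg mulgV] cont_mul _] oB.
rewrite openE => _ [a Aa [b Bb ->]].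
have aB_sub : mul (inv a) @^-1` B `<=` set_mul mul A B.
  by move=> y By; exists a => //; exists (mul (inv a) y); rewrite // mulA mulgV mul1g.
apply: (filterS aB_sub); apply: open_nbhs_nbhs; split.
  by apply: open_comp oB => x _; apply: continuous_mull.
by rewrite /= mulA mulVg mul1g.
Qed.

Theorem lemma5p4 (R : realType) (G : topologicalType)
  (mul : G -> G -> G) (inv : G -> G) (one : G) (d : G -> G -> \bar R) :
  polish_topometric_group mul inv one d ->
  forall (U : set G) (eps : R), open U -> 0 < eps ->
    thicken d U eps = set_mul mul (thicken d [set one] eps) U /\
    open (thicken d U eps).
Proof.
move=> [[top_G _] _ [_ d_invr] _ _] U eps oU _.
have [group_G _ _] := top_G.
have thickenE := thicken_set_mul group_G U eps d_invr.
by split; rewrite // thickenE; apply: open_set_mul top_G oU.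
Qed.
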